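(* Let $G$ be a cyclically $4$-edge-connected cubic graph with a distinguished edge $e$ that is not contained in any cyclic $4$-edge-cut of $G$. Suppose that for every cyclic $4$-edge-cut $E(A,B)$ of $G$ with $e$ an edge of $G[A]$, the set $B$ is not solid. Then for every such cut, $G[B]$ is a twisted net.
   Context: An edge-cut $E(A,B)$ is a $k$-edge-cut if it has exactly $k$ edges, cyclic if both $G[A]$ and $G[B]$ contain a cycle; $G$ is cyclically $4$-edge-connected if it has no cyclic edge-cut with fewer than four edges. For a cyclic $4$-edge-cut $E(A,B)$, $B$ is solid if there is no partition of $B$ into two parts, each with at least two vertices, joined by exactly two edges of $G[B]$. In a graph with all degrees $2$ or $3$, the degree-two vertices are corners; for a graph consisting of a single edge, both its ends are corners. Twisted nets are defined inductively: a $4$-cycle is a twisted net; if $T$ is a twisted net and $H$ is (disjoint from $T$) either a twisted net or a single edge, then the graph obtained from $T\cup H$ by adding edges $uv$ and $u'v'$, where $u\neq u'$ are corners of $T$ and $v\ne v'$ are corners of $H$, is a twisted net. *)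

From mathcomp Require Import all_boot.
Set Implicit Arguments. Unset Strict Implicit. Unset Printing Implicit Defensive.

Section Graph.
Variables (V : finType) (adj : rel V).

Definition simple_graph : Prop := symmetric adj /\ irreflexive adj.

Definition deg_in (S : {set V}) (x : V) : nat := #|[set y in S | adj x y]|.

Definition cubic : Prop := forall x : V, deg_in [set: V] x = 3.

(* number of edges of G joining S1 to S2 (for disjoint S1, S2, each edge counted once) *)
Definition n_edges_between (S1 S2 : {set V}) : nat :=
  #|[set p : V * V | [&& p.1 \in S1, p.2 \in S2 & adj p.1 p.2]]|.

Definition has_cycle_in (S : {set V}) : Prop :=
  exists s : seq V, [/\ 2 < size s, uniq s, {subset s <= S} & cycle adj s].

Definition is_kcut (k : nat) (A : {set V}) : Prop := n_edges_between A (~: A) = k.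

Definition cyclic_cut (A : {set V}) : Prop := has_cycle_in A /\ has_cycle_in (~: A).

Definition cyclic_kcut (k : nat) (A : {set V}) : Prop := is_kcut k A /\ cyclic_cut A.

Definition cyclically_4_edge_connected : Prop :=
  forall (A : {set V}) (k : nat), k < 4 -> ~ cyclic_kcut k A.

Definition solid (B : {set V}) : Prop :=
  ~ exists B1 B2 : {set V},
      [/\ B1 :|: B2 = B, [disjoint B1 & B2], 2 <= #|B1|, 2 <= #|B2|
        & n_edges_between B1 B2 = 2].

Definition corner (S : {set V}) (x : V) : bool := (x \in S) && (deg_in S x == 2).

Definition single_edge (S : {set V}) : Prop :=
  exists a b, adj a b /\ S = [set a; b].

(* G[S] is a twisted net (defined inductively on induced subgraphs of G;
   every graph arising in the inductive construction is an induced subgraph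
   of the result, so this matches the paper's definition up to isomorphism). *)
Inductive twisted_net : {set V} -> Prop :=
| TN_cycle (S : {set V}) :
    #|S| = 4 -> (forall x, x \in S -> deg_in S x = 2) -> twisted_net S
| TN_join (T H : {set V}) (u u' v v' : V) :
    twisted_net T ->
    (twisted_net H /\ corner H v /\ corner H v') \/ single_edge H ->
    [disjoint T & H] ->
    corner T u -> corner T u' -> u != u' ->
    v \in H -> v' \in H -> v != v' ->
    (forall a b, a \in T -> b \in H ->
       adj a b = ((a == u) && (b == v)) || ((a == u') && (b == v'))) ->
    twisted_net (T :|: H).

End Graph.

(* As B is not solid it splits into B1 and B2 joined by exactly two
   edges, so the edge cuts around B1 and B2 have sizes summing to 8.  In a cubic graph a
   cycle-free set X with |X| >= 2 is left by at least |X| + 2 edges, and a set containing a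
   cycle by at least 4, since its complement contains the cycles of A.  Hence both cuts have
   exactly 4 edges, and each Bi either contains a cycle, so that E(~Bi, Bi) is a cyclic
   4-edge-cut with e on the other side and Bi is a twisted net by induction, or is a single
   edge.  Cyclic 4-edge-connectivity also forces the two joining edges to have distinct ends
   on each side, and these ends to be corners of Bi when Bi contains a cycle; this is exactly
   the inductive rule for twisted nets (two single edges forming a 4-cycle). *)

From mathcomp Require Import all_boot zify_ssreflect.
From Stdlib Require Import Classical.
Set Implicit Arguments. Unset Strict Implicit. Unset Printing Implicit Defensive.

Lemma setC_partition (T : finType) (X Y Z : {set T}) :
  [disjoint X & Y] -> X :|: Y = ~: Z -> ~: X = Y :|: Z.
Proof.
move=> dXY defZ; rewrite -[Z]setCK -defZ setCU setUIr setUCr setIT.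
by apply/esym/setUidPr; rewrite -disjoints_subset disjoint_sym.
Qed.

Section CubicGraph.
Variables (V : finType) (adj : rel V).

Definition cut_size (S : {set V}) : nat := n_edges_between adj S (~: S).

Definition two_edge_split (B S S' : {set V}) : Prop :=
  [/\ S :|: S' = B, [disjoint S & S'], 2 <= #|S|, 2 <= #|S'|
     & n_edges_between adj S S' = 2].

Definition cross_edges (T H : {set V}) (u v u' v' : V) : Prop :=
  forall a b, a \in T -> b \in H ->
    adj a b = ((a == u) && (b == v)) || ((a == u') && (b == v')).

Lemma deg_inE (S : {set V}) a : deg_in adj S a = \sum_(b in S) (adj a b : nat).
Proof.
rewrite /deg_in -sum1dep_card big_mkcondr /=.
by apply: eq_bigr => b _; case: (adj a b).
Qed.

Lemma n_edges_betweenE (S1 S2 : {set V}) :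
  n_edges_between adj S1 S2 = \sum_(a in S1) deg_in adj S2 a.
Proof.
rewrite /n_edges_between -sum1dep_card.
rewrite -(pair_big_dep (mem S1) (fun a b => (b \in S2) && adj a b) (fun _ _ => 1)) /=.
by apply: eq_bigr => a _; rewrite /deg_in -sum1dep_card.
Qed.

Lemma deg_inU (X Y : {set V}) a : [disjoint X & Y] ->
  deg_in adj (X :|: Y) a = deg_in adj X a + deg_in adj Y a.
Proof. by move=> dXY; rewrite !deg_inE -bigU //; apply: eq_bigl => b; rewrite !inE. Qed.

Lemma deg_inS (X Y : {set V}) a : X \subset Y -> deg_in adj X a <= deg_in adj Y a.
Proof.
move=> sXY; apply/subset_leq_card/subsetP => b; rewrite !inE => /andP [bX ->].
by rewrite (subsetP sXY).
Qed.

Lemma deg_in_gt0 (S : {set V}) a b : b \in S -> adj a b -> 0 < deg_in adj S a.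
Proof. by move=> bS ab; rewrite card_gt0; apply/set0Pn; exists b; rewrite inE bS. Qed.

Lemma deg_in_gt1 (S : {set V}) a b b' : b \in S -> b' \in S -> b != b' ->
  adj a b -> adj a b' -> 1 < deg_in adj S a.
Proof.
move=> bS b'S bb' ab ab'; have <- : #|[set b; b']| = 2 by rewrite cards2 bb'.
by apply/subset_leq_card/subsetP => z /set2P [] ->; rewrite inE ?bS ?b'S.
Qed.

Lemma n_edges_betweenUl (X Y S : {set V}) : [disjoint X & Y] ->
  n_edges_between adj (X :|: Y) S = n_edges_between adj X S + n_edges_between adj Y S.
Proof. by move=> dXY; rewrite !n_edges_betweenE -bigU //; apply: eq_bigl => b; rewrite !inE. Qed.

Lemma n_edges_betweenUr (X Y S : {set V}) : [disjoint X & Y] ->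
  n_edges_between adj S (X :|: Y) = n_edges_between adj S X + n_edges_between adj S Y.
Proof.
move=> dXY; rewrite !n_edges_betweenE -big_split.
by apply: eq_bigr => a _; apply: deg_inU.
Qed.

Lemma n_edges_between1l w (S : {set V}) : n_edges_between adj [set w] S = deg_in adj S w.
Proof. by rewrite n_edges_betweenE big_set1. Qed.

Lemma has_cycle_in_subset (S S' : {set V}) :
  S \subset S' -> has_cycle_in adj S -> has_cycle_in adj S'.
Proof. by move=> sSS' [s [s3 us sS cs]]; exists s; split=> // z /sS /(subsetP sSS'). Qed.

Lemma has_cycle_in_setC (A X : {set V}) :
  has_cycle_in adj A -> X \subset ~: A -> has_cycle_in adj (~: X).
Proof. by move=> cycA XA; apply: has_cycle_in_subset cycA; rewrite subsetC. Qed.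

Hypothesis adj_sym : symmetric adj.

Lemma n_edges_betweenC (X Y : {set V}) :
  n_edges_between adj X Y = n_edges_between adj Y X.
Proof.
rewrite !n_edges_betweenE; under eq_bigr do rewrite deg_inE.
under [RHS]eq_bigr do rewrite deg_inE.
by rewrite exchange_big; apply: eq_bigr => b _; apply: eq_bigr => a _; rewrite adj_sym.
Qed.

Lemma two_edge_splitC (B S S' : {set V}) : two_edge_split B S S' -> two_edge_split B S' S.
Proof.
by case=> defB dSS' S2 S'2 eSS'; split; rewrite 1?setUC 1?disjoint_sym 1?n_edges_betweenC.
Qed.

Lemma cross_edgesC (T H : {set V}) u v u' v' :
  cross_edges T H u v u' v' -> cross_edges H T v u v' u'.
Proof. by move=> cross b a bH aT; rewrite adj_sym cross // andbC [(a == u') && _]andbC. Qed.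

Hypothesis adj_irr : irreflexive adj.

Lemma deg_in_set1 w : deg_in adj [set w] w = 0.
Proof. by rewrite deg_inE big_set1 adj_irr. Qed.

Lemma deg_in_setD1 (S : {set V}) w : deg_in adj (S :\ w) w = deg_in adj S w.
Proof.
apply: eq_card => b; rewrite !inE.
by case: eqP => [->|_]; rewrite ?adj_irr ?andbF.
Qed.

Lemma path_closes_cycle (S : {set V}) l r :
  1 < deg_in adj S l -> uniq (l :: r) -> {subset l :: r <= S} -> path adj l r ->
  {in S, forall z, adj l z -> z \in r} -> has_cycle_in adj S.
Proof.
move=> l2 ulr lrS plr Nr.
have [w] : exists w, w \in [set z in S | adj l z] :\ head l r.
  apply/set0Pn; rewrite -card_gt0; move: l2; rewrite /deg_in (cardsD1 (head l r)); lia.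
rewrite !inE => /and3P [wh wS lw].
case: r ulr lrS plr Nr wh => [|h r] ulr lrS plr Nr wh; first by have := Nr w wS lw.
have wr : w \in r by move: (Nr w wS lw); rewrite inE (negbTE wh).
case/splitPr: wr ulr lrS plr => p1 p2 ulr lrS plr.
rewrite -cat_rcons -!cat_cons in ulr lrS plr.
exists (l :: h :: rcons p1 w); split.
- by rewrite /= size_rcons.
- exact: subseq_uniq (prefix_subseq _ _) ulr.
- by move=> z zc; apply: lrS; rewrite mem_cat zc.
- move: plr; rewrite cat_path /= !rcons_path last_rcons => /andP [/and3P [-> -> ->] _].
  by rewrite adj_sym lw.
Qed.

Lemma has_cycle_in_min_deg (S : {set V}) x0 :
  x0 \in S -> {in S, forall z, 1 < deg_in adj S z} -> has_cycle_in adj S.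
Proof.
move=> x0S degS.
suff longest l r : uniq (l :: r) -> {subset l :: r <= S} -> path adj l r ->
    has_cycle_in adj S.
  by apply: (longest x0 [::]) => // z; rewrite inE => /eqP ->.
have [n] := ubnP (#|S| - size r); elim: n l r => // n IH l r ltSn ulr lrS plr.
have lS : l \in S by apply/lrS/mem_head.
have [z /and3P [zS lz zlr] | maximal] := pickP [pred z in S | adj l z && (z \notin l :: r)].
  have : size (z :: l :: r) <= #|S|.
    have /card_uniqP <- : uniq (z :: l :: r) by rewrite /= zlr.
    by apply/subset_leq_card/subsetP => t; rewrite inE => /predU1P [->|/lrS].
  move=> /= leS; apply: (IH z (l :: r)); rewrite /= ?zlr 1?adj_sym ?lz //.
    (* [size r] occurs at two different (convertible) element types; [set] merges them. *)
    by move: ltSn leS; set k := #|S|; set m := size r; lia.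
  by move=> t; rewrite inE => /predU1P [->|/lrS].
apply: (path_closes_cycle (degS l lS) ulr lrS plr) => z zS lz.
move: (maximal z); rewrite /= zS lz /= => /negbFE /predU1P [zl|//].
by rewrite zl adj_irr in lz.
Qed.

Lemma has_cycle_in_setD1 (T : {set V}) u :
  has_cycle_in adj T -> deg_in adj T u <= 1 -> has_cycle_in adj (T :\ u).
Proof.
move=> [s [s3 us sT cs]] u1.
have [/rot_to [i c defc] | /negPf nus] := boolP (u \in s); last first.
  by exists s; split=> // z zs; rewrite !inE sT // andbT; apply: contraFneq nus => <-.
have c2 : 1 < size c by rewrite -ltnS -[(size c).+1]/(size (u :: c)) -defc size_rot.
have := rot_cycle i adj s; have := rot_uniq i s.
have csub : {subset u :: c <= T} by move=> z; rewrite -defc mem_rot; apply: sT.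
rewrite defc cs us; case: c {defc} c2 csub => [|a [|b r]] // _ csub.
rewrite /= rcons_path => /and3P [_ ar _] /and4P [ua _ _ lu].
have ab : a != last b r by apply: contraNneq ar => ->; rewrite mem_last.
have aT : a \in T by apply/csub/mem_behead/mem_head.
have lT : last b r \in T by apply/csub/mem_behead/mem_behead/mem_last.
by have := deg_in_gt1 aT lT ab ua; rewrite adj_sym lu ltnNge u1 => /(_ isT).
Qed.

Lemma has_cycle_in_setU1_edge a b w :
  adj a b -> 1 < deg_in adj [set a; b] w -> has_cycle_in adj (w |: [set a; b]).
Proof.
move=> ab w2.
have ba : a != b by apply: contraTneq ab => ->; rewrite adj_irr.
have : [set z in [set a; b] | adj w z] = [set a; b].
  apply/eqP; rewrite eqEcard (leq_trans _ w2) ?andbT ?cards2 ?ltnS ?leq_b1 //.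
  by apply/subsetP => z; rewrite inE => /andP [].
move/setP => N; have := N a; have := N b; rewrite !inE !eqxx orbT /= => wb wa.
exists [:: w; a; b]; split=> //.
- rewrite /= !inE negb_or ba !andbT.
  by apply/andP; split; apply/eqP => e; [move: wa | move: wb]; rewrite e adj_irr.
- by move=> z; rewrite !inE => /or3P [] ->; rewrite ?orbT.
- by rewrite /= wa ab adj_sym wb.
Qed.

Lemma n_edges_between2 (X Y : {set V}) : n_edges_between adj X Y = 2 ->
  exists u v u' v', [/\ (u, v) != (u', v'),
    [&& u \in X, u' \in X, v \in Y & v' \in Y] & cross_edges X Y u v u' v'].
Proof.
move/eqP/cards2P => [[u v] [[u' v'] [uvu'v' /setP memE]]].
exists u, v, u', v'; split=> //.
  have := memE (u, v); have := memE (u', v'); rewrite !inE !eqxx ?orbT /=.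
  by move=> /and3P [-> -> _] /and3P [-> -> _].
by move=> a b aX bY; have := memE (a, b); rewrite !inE /= aX bY /= !xpair_eqE.
Qed.

Lemma deg_in1 (S : {set V}) a b :
  b \in S -> {in S, forall z, adj a z = (z == b)} -> deg_in adj S a = 1.
Proof.
move=> bS Na; rewrite -(cards1 b); apply: eq_card => z; rewrite !inE.
by have [/Na //|zS] := boolP (z \in S); apply/esym/eqP => zb; rewrite zb bS in zS.
Qed.

Lemma single_edge_deg (S : {set V}) z : single_edge adj S -> z \in S -> deg_in adj S z = 1.
Proof.
move=> [a [b [ab ->]]] zab; wlog -> : a b ab zab / z = a.
  move=> base; move: (zab); rewrite !inE => /orP [] /eqP zE; first exact: base.
  by rewrite setUC; apply: base => //; [rewrite adj_sym | rewrite !inE zE eqxx].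
have ab' : a != b by apply: contraTneq ab => ->; rewrite adj_irr.
apply: (@deg_in1 _ a b) => [|y]; rewrite !inE ?eqxx ?orbT // => /orP [] /eqP ->.
  by rewrite adj_irr (negbTE ab').
by rewrite ab eqxx.
Qed.

Lemma single_edgeE (S : {set V}) u u' :
  single_edge adj S -> u \in S -> u' \in S -> u != u' -> S = [set u; u'].
Proof.
move=> [a [b [_ ->]]] uS u'S uu'; apply/eqP; rewrite eq_sym eqEcard !cards2 uu' ltnS leq_b1 andbT.
by apply/subsetP => z /set2P [] ->.
Qed.

Lemma cross_edges_deg (T H : {set V}) u v u' v' :
  cross_edges T H u v u' v' -> u != u' -> u \in T -> u' \in T -> v \in H -> v' \in H ->
  deg_in adj H u = 1 /\ deg_in adj H u' = 1.
Proof.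
move=> cross uu' uT u'T vH v'H.
split; [apply: (@deg_in1 _ _ v) | apply: (@deg_in1 _ _ v')] => // b bH;
  by rewrite cross // eqxx ?(eq_sym u') (negbTE uu') ?orbF.
Qed.

Lemma twisted_net_join2 (T H : {set V}) u u' v v' :
  cross_edges T H u v u' v' -> [disjoint T & H] -> u != u' -> v != v' ->
  u \in T -> u' \in T -> v \in H -> v' \in H ->
  (twisted_net adj T /\ corner adj T u /\ corner adj T u') \/ single_edge adj T ->
  (twisted_net adj H /\ corner adj H v /\ corner adj H v') \/ single_edge adj H ->
  twisted_net adj (T :|: H).
Proof.
move=> cross disj uu' vv' uT u'T vH v'H [[netT [cu cu']] | eT] sideH.
  exact: TN_join netT sideH disj cu cu' uu' vH v'H vv' cross.
have [[netH [cv cv']] | eH] := sideH.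
  rewrite setUC; apply: TN_join netH (or_intror eT) _ cv cv' vv' uT u'T uu' _.
    by rewrite disjoint_sym.
  exact: cross_edgesC.
have [degu degu'] := cross_edges_deg cross uu' uT u'T vH v'H.
have [degv degv'] := cross_edges_deg (cross_edgesC cross) vv' vH v'H uT u'T.
apply: TN_cycle => [|z].
  rewrite cardsU (disjoint_setI0 disj) cards0 subn0.
  by rewrite (single_edgeE eT uT u'T uu') (single_edgeE eH vH v'H vv') !cards2 uu' vv'.
rewrite inE deg_inU // => /orP [] zS.
  rewrite (single_edge_deg eT zS); move: zS; rewrite (single_edgeE eT uT u'T uu').
  by case/set2P => ->; rewrite ?degu ?degu'.
rewrite (single_edge_deg eH zS); move: zS; rewrite (single_edgeE eH vH v'H vv').
by case/set2P => ->; rewrite ?degv ?degv'.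
Qed.

Hypothesis adj_cubic : cubic adj.

Lemma deg_inC (S : {set V}) a : deg_in adj S a + deg_in adj (~: S) a = 3.
Proof. by rewrite -deg_inU ?setUCr ?adj_cubic // disjoints_subset setCK. Qed.

Lemma n_edges_between_cut (S : {set V}) :
  n_edges_between adj S S + cut_size S = 3 * #|S|.
Proof.
rewrite /cut_size !n_edges_betweenE -big_split /=.
by under eq_bigr do rewrite deg_inC; rewrite sum_nat_const mulnC.
Qed.

Lemma cut_sizeU1 (X : {set V}) w : w \notin X ->
  cut_size (w |: X) + 2 * deg_in adj X w = cut_size X + 3.
Proof.
move=> wX; have dwX : [disjoint [set w] & X] by rewrite disjoints1.
have := n_edges_between_cut X; have := n_edges_between_cut (w |: X).
rewrite cardsU1 wX n_edges_betweenUl // n_edges_between1l deg_inU // deg_in_set1.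
rewrite n_edges_betweenUr // (n_edges_betweenC X) n_edges_between1l; lia.
Qed.

Lemma acyclic_cut_size (S : {set V}) :
  0 < #|S| -> ~ has_cycle_in adj S -> #|S|.+2 <= cut_size S.
Proof.
have [n] := ubnP #|S|; elim: n S => // n IH S ltSn S0 acycS.
have /exists_inP [w wS w1] : [exists w in S, deg_in adj S w <= 1].
  apply/contraT => /exists_inPn deg2; case/card_gt0P: S0 => x0 x0S.
  by exfalso; apply/acycS/(has_cycle_in_min_deg x0S) => z /deg2; rewrite -ltnNge.
have := cut_sizeU1 (negbT (setD11 w S)); rewrite setD1K // deg_in_setD1.
have := cardsD1 w S; rewrite wS.
have [S'0|S'pos] := posnP #|S :\ w|.
  have : deg_in adj S w = 0.
    rewrite -deg_in_setD1; apply/eqP; rewrite -leqn0 -S'0.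
    by apply/subset_leq_card/subsetP => z; rewrite inE => /andP [].
  lia.
have acycS' : ~ has_cycle_in adj (S :\ w) by move/(has_cycle_in_subset (subD1set S w)).
have := IH (S :\ w) _ S'pos acycS'; lia.
Qed.

Lemma cut_size4_cases (S : {set V}) :
  cut_size S = 4 -> 2 <= #|S| -> has_cycle_in adj S \/ single_edge adj S.
Proof.
move=> cut4 S2; have [cycS|acycS] := classic (has_cycle_in adj S); [by left | right].
have cS : #|S| = 2 by have := acyclic_cut_size (ltnW S2) acycS; lia.
have : 0 < n_edges_between adj S S by have := n_edges_between_cut S; lia.
rewrite card_gt0 => /set0Pn [[a b]]; rewrite inE /= => /and3P [aS bS ab].
exists a, b; split=> //; apply/eqP; rewrite eq_sym eqEcard cS cards2.
have -> : a != b by apply: contraTneq ab => ->; rewrite adj_irr.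
by apply/andP; split=> //; apply/subsetP => z /set2P [] ->.
Qed.

Hypothesis c4 : cyclically_4_edge_connected adj.

Lemma cut_size_cyclic (S : {set V}) :
  has_cycle_in adj S -> has_cycle_in adj (~: S) -> 4 <= cut_size S.
Proof. by move=> cycS cycC; rewrite leqNgt; apply/negP => lt4; apply: (c4 lt4). Qed.

Lemma cut_size_ge4 (S : {set V}) :
  has_cycle_in adj (~: S) -> 2 <= #|S| -> 4 <= cut_size S.
Proof.
move=> cycC S2; have [cycS|acycS] := classic (has_cycle_in adj S).
  exact: cut_size_cyclic.
by have := acyclic_cut_size (ltnW S2) acycS; lia.
Qed.

Lemma cut4_deg_in (T : {set V}) u :
  has_cycle_in adj T -> has_cycle_in adj (~: T) -> cut_size T = 4 ->
  u \in T -> 0 < deg_in adj (~: T) u -> deg_in adj T u = 2.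
Proof.
(* Otherwise T :\ u still contains a cycle but is cut by at most three edges. *)
move=> cycT cycC cut4 uT out; have := deg_inC T u.
suff : 1 < deg_in adj T u by lia.
rewrite ltnNge; apply/negP => u1.
have : 4 <= cut_size (T :\ u).
  apply: cut_size_cyclic; first exact: has_cycle_in_setD1.
  by apply: has_cycle_in_subset cycC; rewrite setCS subD1set.
have := cut_sizeU1 (negbT (setD11 u T)); rewrite setD1K // deg_in_setD1; lia.
Qed.

Lemma cut4_deg_in_le1 (X : {set V}) w :
  cut_size X = 4 -> has_cycle_in adj X \/ single_edge adj X -> w \notin X ->
  has_cycle_in adj (~: (w |: X)) -> deg_in adj X w <= 1.
Proof.
move=> cut4 cycX wX cycC; rewrite leqNgt; apply/negP => w2.
have : 4 <= cut_size (w |: X).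
  apply: cut_size_cyclic cycC; case: cycX => [cycX | [a [b [ab defX]]]].
    by apply: has_cycle_in_subset cycX; apply: subsetUr.
  by rewrite defX; apply: has_cycle_in_setU1_edge; rewrite -?defX.
have := cut_sizeU1 wX; lia.
Qed.

Lemma cut4_side (S : {set V}) w w' :
  cut_size S = 4 -> 2 <= #|S| -> has_cycle_in adj (~: S) ->
  w \in S -> w' \in S -> 0 < deg_in adj (~: S) w -> 0 < deg_in adj (~: S) w' ->
  (has_cycle_in adj S -> twisted_net adj S) ->
  (twisted_net adj S /\ corner adj S w /\ corner adj S w') \/ single_edge adj S.
Proof.
move=> cut4 S2 cycC wS w'S ow ow' net.
have [cycS|] := cut_size4_cases cut4 S2; last by right.
by left; split; [exact: net | rewrite /corner wS w'S !(cut4_deg_in cycS cycC cut4)].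
Qed.

Section Split.
Variables (A S S' : {set V}).
Hypotheses (cutA : cyclic_kcut adj 4 A) (splitS : two_edge_split (~: A) S S').

Lemma split_cut_size : cut_size S = 4 /\ cut_size S' = 4.
Proof.
have [[defSS' disjSS' S2 S'2 edgesSS'] [cycA _]] := (splitS, cutA.2).
have [defS'S disjS'S _ _ edgesS'S] := two_edge_splitC splitS.
have SA : S \subset ~: A by rewrite -defSS' subsetUl.
have S'A : S' \subset ~: A by rewrite -defSS' subsetUr.
have cutS : cut_size S = 2 + n_edges_between adj S A.
  by rewrite /cut_size (setC_partition disjSS' defSS') n_edges_betweenUr ?edgesSS' ?disjoints_subset.
have cutS' : cut_size S' = 2 + n_edges_between adj S' A.
  by rewrite /cut_size (setC_partition disjS'S defS'S) n_edges_betweenUr ?edgesS'S ?disjoints_subset.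
have : n_edges_between adj S A + n_edges_between adj S' A = 4.
  by rewrite -n_edges_betweenUl // defSS' n_edges_betweenC; case: cutA.
have := cut_size_ge4 (has_cycle_in_setC cycA SA) S2.
have := cut_size_ge4 (has_cycle_in_setC cycA S'A) S'2.
lia.
Qed.

Lemma split_attached_once :
  {in S', forall w, deg_in adj S w <= 1} /\ {in S, forall w, deg_in adj S' w <= 1}.
Proof.
have [[defSS' disjSS' S2 S'2 _] [cutS cutS']] := (splitS, split_cut_size).
have once X w : cut_size X = 4 -> 2 <= #|X| -> X \subset ~: A ->
    w \notin X -> w \in ~: A -> deg_in adj X w <= 1.
  move=> cutX X2 XA wX wA; apply: cut4_deg_in_le1 (cut_size4_cases cutX X2) wX _ => //.
  by apply: has_cycle_in_setC cutA.2.1 _; rewrite subUset sub1set wA.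
split=> w wS; apply: once; rewrite -?defSS' ?subsetUl ?subsetUr ?inE ?wS ?orbT //.
  by rewrite (disjointFl disjSS' wS).
by rewrite (disjointFr disjSS' wS).
Qed.

Lemma split_cross_edges : exists u v u' v',
  [/\ [&& u \in S, u' \in S, v \in S' & v' \in S'], u != u', v != v'
    & cross_edges S S' u v u' v'].
Proof.
have [_ _ _ _ /n_edges_between2 [u [v [u' [v' [uvu'v' mem cross]]]]]] := splitS.
have /and4P [uS u'S vS' v'S'] := mem.
have uv : adj u v by rewrite cross // !eqxx.
have u'v' : adj u' v' by rewrite cross // !eqxx orbT.
have [once_v once_u] := split_attached_once.
exists u, v, u', v'; split=> //.
- apply: contraNneq (uvu'v') => uu'; rewrite xpair_eqE uu' eqxx /=.
  apply: contraTT (once_u u uS) => vv'; have uv' : adj u v' by rewrite uu'.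
  by rewrite -ltnNge (deg_in_gt1 vS' v'S' vv' uv uv').
- apply: contraNneq (uvu'v') => vv'; rewrite xpair_eqE vv' eqxx andbT.
  apply: contraTT (once_v v vS') => uu'; have vu' : adj v u' by rewrite vv' adj_sym.
  by rewrite -ltnNge (deg_in_gt1 uS u'S uu' _ vu') // adj_sym.
Qed.

Lemma split_side w w' :
  w \in S -> w' \in S -> 0 < deg_in adj S' w -> 0 < deg_in adj S' w' ->
  (cyclic_kcut adj 4 (~: S) -> twisted_net adj S) ->
  (twisted_net adj S /\ corner adj S w /\ corner adj S w') \/ single_edge adj S.
Proof.
move=> wS w'S ow ow' net.
have [[defSS' disjSS' S2 _ _] [cutS _]] := (splitS, split_cut_size).
have S'C : S' \subset ~: S by rewrite -disjoints_subset disjoint_sym.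
have cycC : has_cycle_in adj (~: S).
  by apply: has_cycle_in_setC cutA.2.1 _; rewrite -defSS' subsetUl.
apply: (cut4_side cutS S2 cycC wS w'S).
- exact: leq_trans ow (deg_inS _ S'C).
- exact: leq_trans ow' (deg_inS _ S'C).
- move=> cycS; apply: net.
  by split; [rewrite /is_kcut setCK n_edges_betweenC | split; rewrite ?setCK].
Qed.

End Split.

End CubicGraph.

Theorem mainTheorem15 (V : finType) (adj : rel V) (x y : V) :
  simple_graph adj -> cubic adj -> cyclically_4_edge_connected adj ->
  adj x y ->
  (forall A : {set V}, cyclic_kcut adj 4 A -> (x \in A) = (y \in A)) ->
  (forall A : {set V}, cyclic_kcut adj 4 A -> x \in A -> y \in A ->
     ~ solid adj (~: A)) ->
  forall A : {set V}, cyclic_kcut adj 4 A -> x \in A -> y \in A ->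
    twisted_net adj (~: A).
Proof.
move=> [adj_sym adj_irr] adj_cubic c4 _ _ not_solid A.
have [n] := ubnP #|~: A|; elim: n A => // n IH A ltBn cutA xA yA.
have [B1 [B2 splitB]] : exists B1 B2, two_edge_split adj (~: A) B1 B2.
  exact: NNPP (not_solid A cutA xA yA).
have IHside S S' :
    two_edge_split adj (~: A) S S' -> cyclic_kcut adj 4 (~: S) -> twisted_net adj S.
  case=> defS disjS _ S'2 _ cutS; rewrite -[S]setCK; apply: IH cutS _ _.
  - by rewrite setCK; move: ltBn; rewrite -defS cardsU (disjoint_setI0 disjS) cards0; lia.
  - by rewrite inE; apply: contraL xA => xS; rewrite -in_setC -defS inE xS.
  - by rewrite inE; apply: contraL yA => yS; rewrite -in_setC -defS inE yS.
have [u [v [u' [v' [/and4P [uB1 u'B1 vB2 v'B2] uu' vv' cross]]]]] :=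
  split_cross_edges adj_sym adj_irr adj_cubic c4 cutA splitB.
have uv : adj u v by rewrite cross // !eqxx.
have u'v' : adj u' v' by rewrite cross // !eqxx orbT.
have [defB disjB _ _ _] := splitB.
rewrite -defB; apply: (twisted_net_join2 adj_sym adj_irr cross) => //.
  apply: (split_side adj_sym adj_irr adj_cubic c4 cutA splitB) => //.
  - exact: deg_in_gt0 vB2 uv.
  - exact: deg_in_gt0 v'B2 u'v'.
  - exact: IHside splitB.
have splitB' := two_edge_splitC adj_sym splitB.
apply: (split_side adj_sym adj_irr adj_cubic c4 cutA splitB') => //.
- by apply: deg_in_gt0 uB1 _; rewrite adj_sym.
- by apply: deg_in_gt0 u'B1 _; rewrite adj_sym.
- exact: IHside splitB'.
Qed.
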